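(* Let $G=(N,E,W)$ be a finite undirected graph with positive edge weights $W=\{w_e : e\in E\}$, let $x,y\in N$ with $xy\notin E$, and let $G^*=(N,E^*,W^* )$ with $E^*=E\cup\{xy\}$ and $W^*=W\cup\{w_{x,y}\}$ for some weight $w_{x,y}>0$. Let $d$ and $d^*$ be the hop distances of $G$ and $G^*$, let $\mu_a,\mu^*_a$ be the neighbor measures and $k,k^*$ the Ollivier-Ricci curvatures of $G$ and $G^*$ (defined in the context). Then for any nodes $a\neq b$ in $N$, $$k^*(a,b)-k(a,b)\le \frac{W_1^{d}(\mu_a,\mu_b)-W_1^{d^*}(\mu^*_a,\mu^*_b)}{d^*(a,b)}.$$ Moreover, if $a,b\notin\{x,y\}$ and there exists a coupling $\pi^*$ attaining the minimum in $W_1^{d^*}(\mu^*_a,\mu^*_b)$, then $$k^*(a,b)-k(a,b)\le \frac{\|d-d^*\|_{\infty,N}}{d^*(a,b)},\qquad\text{where }\ \|d-d^*\|_{\infty,N}=\max_{(u,v)\in N^2}|d(u,v)-d^*(u,v)|.$$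
   Context: The graph $G$ is assumed connected, so all hop distances are finite. The hop distance $d(u,v)$ in a graph is the minimum number of edges on a path from $u$ to $v$ (weights are ignored). For a node $a$, $N_a$ denotes its set of neighbors in $G$ and $N^*_a$ its set of neighbors in $G^*$. The neighbor measures are the probability measures on $N$ given by $\mu_a(v)=\frac{w_{a,v}}{\sum_{c\in N_a} w_{a,c}}$ for $v\in N_a$ (and $0$ otherwise), and $\mu^*_a(v)=\frac{w^*_{a,v}}{\sum_{c\in N^*_a} w^*_{a,c}}$ for $v\in N^*_a$ (and $0$ otherwise). For a metric $\delta$ on $N$ and probability measures $\mu,\nu$ on $N$, the Wasserstein distance is $W_1^{\delta}(\mu,\nu)=\inf_{\gamma}\sum_{i,j\in N}\delta(i,j)\gamma_{i,j}$, the infimum over couplings $\gamma$ (nonnegative matrices with row marginals $\mu$ and column marginals $\nu$). The Ollivier-Ricci curvature of a pair $a\neq b$ is $k(a,b)=1-\frac{W_1^{d}(\mu_a,\mu_b)}{d(a,b)}$ in $G$ and $k^*(a,b)=1-\frac{W_1^{d^*}(\mu^*_a,\mu^*_b)}{d^*(a,b)}$ in $G^*$. *)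

From mathcomp Require Import all_boot all_order all_algebra.
From mathcomp Require Import boolp classical_sets reals.
Set Implicit Arguments. Unset Strict Implicit. Unset Printing Implicit Defensive.
Import Order.TTheory GRing.Theory Num.Theory.
Local Open Scope ring_scope.
Local Open Scope classical_set_scope.

Section Defs.
Variable T : finType.

Definition simple_graph (e : rel T) : Prop :=
  irreflexive e /\ symmetric e.

Fixpoint walk (e : rel T) (n : nat) (u v : T) : bool :=
  match n with
  | 0 => u == v
  | n'.+1 => [exists w, e u w && walk e n' w v]
  end.

(* hop distance: the least n with a walk of n edges from u to v.  In a
   connected graph a shortest path has fewer than #|T| edges, so searching
   n in 0 .. #|T|-1 gives the true minimum. *)
Definition hop (e : rel T) (u v : T) : nat :=
  find (fun n => walk e n u v) (iota 0 #|T|).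

Definition add_edge (e : rel T) (x y : T) : rel T :=
  fun u v => [|| e u v, (u == x) && (v == y) | (u == y) && (v == x)].

Variable R : realType.

Definition add_weight (w : T -> T -> R) (x y : T) (wxy : R) : T -> T -> R :=
  fun u v => if ((u == x) && (v == y)) || ((u == y) && (v == x)) then wxy
             else w u v.

Definition nbr_measure (e : rel T) (w : T -> T -> R) (a : T) : T -> R :=
  fun v => if e a v then w a v / (\sum_(c | e a c) w a c) else 0.

Definition coupling (gamma : T -> T -> R) (mu nu : T -> R) : Prop :=
  (forall i j, 0 <= gamma i j) /\
  (forall i, \sum_j gamma i j = mu i) /\
  (forall j, \sum_i gamma i j = nu j).

Definition cost (delta : T -> T -> R) (gamma : T -> T -> R) : R :=
  \sum_i \sum_j delta i j * gamma i j.

Definition W1 (delta : T -> T -> R) (mu nu : T -> R) : R :=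
  inf [set c | exists gamma, coupling gamma mu nu /\ c = cost delta gamma].

Definition hopR (e : rel T) : T -> T -> R := fun u v => (hop e u v)%:R.

Definition ollivier (e : rel T) (w : T -> T -> R) (a b : T) : R :=
  1 - W1 (hopR e) (nbr_measure e w a) (nbr_measure e w b) / hopR e a b.

Definition dist_sup (e e' : rel T) : R :=
  \big[Num.max/0]_(p : T * T) `|hopR e p.1 p.2 - hopR e' p.1 p.2|.

End Defs.
Arguments hopR {T R} e u v.
Arguments dist_sup {T R} e e'.

(** Adding the edge xy can only shorten hop distances, d^* <= d, so the first
    bound amounts to W/d <= W/d^*.  When neither a nor b is an endpoint of the
    new edge, the neighbour measures of a and b do not change, so an optimal
    coupling pi for d^* is also a coupling for d.  Hence W1^d - W1^{d^*} is at
    most the integral of d - d^* against pi, which is at most ||d - d^*||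
    because pi has mass at most 1. *)
From mathcomp Require Import all_boot all_order all_algebra.
From mathcomp Require Import boolp classical_sets reals.
From mathcomp Require Import lra.
Set Implicit Arguments. Unset Strict Implicit. Unset Printing Implicit Defensive.
Import Order.TTheory GRing.Theory Num.Theory.
Local Open Scope ring_scope.

Section HopDistance.
Variable T : finType.

Lemma walk_subrel (e e' : rel T) n u v :
  subrel e e' -> walk e n u v -> walk e' n u v.
Proof.
move=> ee'; elim: n u => [|n IHn] u //= /existsP[z /andP[euz wz]].
by apply/existsP; exists z; rewrite ee' ?IHn.
Qed.

Lemma find_subpred (X : Type) (p q : pred X) (s : seq X) :
  subpred p q -> (find q s <= find p s)%N.
Proof.
move=> pq; elim: s => [|z s IHs] //=.
by case pz: (p z); [rewrite pq | case: (q z)].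
Qed.

Lemma hop_subrel (e e' : rel T) u v : subrel e e' -> (hop e' u v <= hop e u v)%N.
Proof. by move=> ee'; apply: find_subpred => n; apply: walk_subrel. Qed.

Lemma hop_gt0 (e : rel T) u v : u != v -> (0 < hop e u v)%N.
Proof.
move=> uv; rewrite /hop.
have : (0 < #|T|)%N by apply/card_gt0P; exists u.
by case: #|T| => [|n] //= _; rewrite (negbTE uv).
Qed.

Lemma subrel_add_edge (e : rel T) x y : subrel e (add_edge e x y).
Proof. by move=> u v euv; rewrite /add_edge euv. Qed.

End HopDistance.

Section Transport.
Variables (T : finType) (R : realType).
Implicit Types (delta : T -> T -> R) (mu nu : T -> R) (gamma : T -> T -> R).

Lemma cost_ge0 delta gamma :
  (forall i j, 0 <= delta i j) -> (forall i j, 0 <= gamma i j) ->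
  0 <= cost delta gamma.
Proof.
by move=> d0 g0; apply: sumr_ge0 => i _; apply: sumr_ge0 => j _; apply: mulr_ge0.
Qed.

Lemma W1_ge0 delta mu nu : (forall i j, 0 <= delta i j) -> 0 <= W1 delta mu nu.
Proof.
move=> d0; rewrite /W1; set S := (X in inf X).
have [[c Sc]|noS] := pselect (exists c, S c).
  by apply: lb_le_inf => [|_ [g [[g0 _] ->]]]; [exists c | exact: cost_ge0].
suff -> : S = set0 by rewrite inf0.
by rewrite predeqE => z; split => // Sz; apply: noS; exists z.
Qed.

Lemma W1_le_cost delta mu nu gamma :
  (forall i j, 0 <= delta i j) -> coupling gamma mu nu ->
  W1 delta mu nu <= cost delta gamma.
Proof.
move=> d0 cg; apply: ge_inf; last by exists gamma.
by exists 0 => _ [g [[g0 _] ->]]; exact: cost_ge0.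
Qed.

Lemma cost_sub_le delta delta' gamma (D : R) :
  (forall i j, delta i j - delta' i j <= D) -> (forall i j, 0 <= gamma i j) ->
  cost delta gamma - cost delta' gamma <= D * \sum_i \sum_j gamma i j.
Proof.
move=> dD g0; rewrite /cost -sumrB mulr_sumr; apply: ler_sum => i _.
rewrite -sumrB mulr_sumr; apply: ler_sum => j _.
by rewrite -mulrBl ler_wpM2r.
Qed.

Lemma W1_sub_le_optimal delta delta' mu nu gamma (D : R) :
  (forall i j, 0 <= delta i j) -> (forall i j, delta i j - delta' i j <= D) ->
  0 <= D -> \sum_i mu i <= 1 ->
  coupling gamma mu nu -> cost delta' gamma = W1 delta' mu nu ->
  W1 delta mu nu - W1 delta' mu nu <= D.
Proof.
move=> d0 dD D0 mu_le1 cg opt; have [g0 [g_row _]] := cg.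
rewrite -opt; apply: le_trans (_ : _ <= cost delta gamma - cost delta' gamma) _.
  by rewrite lerD2r W1_le_cost.
apply: le_trans (cost_sub_le dD g0) _; under eq_bigr do rewrite g_row.
by rewrite -[leRHS]mulr1 ler_wpM2l.
Qed.

End Transport.

Section Curvature.
Variables (T : finType) (R : realType).

(* Not [= 1]: an isolated vertex gets the zero measure, as [x / 0 = 0]. *)
Lemma nbr_measure_sum_le1 (e : rel T) (w : T -> T -> R) a :
  \sum_v nbr_measure e w a v <= 1.
Proof.
rewrite /nbr_measure -big_mkcond /= -mulr_suml.
by case: (eqVneq (\sum_(c | e a c) w a c) 0) => [->|s0]; rewrite ?mul0r ?divff.
Qed.

Lemma nbr_measure_add_edge (e : rel T) (w : T -> T -> R) x y wxy c :
  c \notin [:: x; y] ->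
  nbr_measure (add_edge e x y) (add_weight w x y wxy) c = nbr_measure e w c.
Proof.
rewrite !inE negb_or => /andP[cx cy]; apply/funext => v.
rewrite /nbr_measure /add_edge /add_weight (negbTE cx) (negbTE cy) /= orbF.
by congr (if _ then _ / _ else _); apply: eq_bigl => z; rewrite orbF.
Qed.

Lemma hopR_ge0 (e : rel T) u v : 0 <= hopR e u v :> R.
Proof. by rewrite /hopR ler0n. Qed.

Lemma ollivier_sub_le (e e' : rel T) (w w' : T -> T -> R) a b :
  subrel e e' -> a != b ->
  ollivier e' w' a b - ollivier e w a b <=
  (W1 (hopR e) (nbr_measure e w a) (nbr_measure e w b)
   - W1 (hopR e') (nbr_measure e' w' a) (nbr_measure e' w' b)) / hopR e' a b.
Proof.
move=> ee' ab; rewrite /ollivier mulrBl.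
set W := W1 (hopR e) _ _; set W' := W1 (hopR e') _ _.
have W0 : 0 <= W by apply/W1_ge0/hopR_ge0.
have d'_gt0 : 0 < hopR e' a b :> R by rewrite /hopR ltr0n hop_gt0.
have d'_le_d : hopR e' a b <= hopR e a b :> R by rewrite /hopR ler_nat hop_subrel.
have : W / hopR e a b <= W / hopR e' a b.
  by rewrite ler_wpM2l // lef_pV2 ?posrE // (lt_le_trans d'_gt0).
lra.
Qed.

Lemma dist_sup_ge (e e' : rel T) u v :
  hopR e u v - hopR e' u v <= dist_sup e e' :> R.
Proof.
apply: le_trans (ler_norm _) _.
exact: (le_bigmax 0 (fun p : T * T => `|hopR e p.1 p.2 - hopR e' p.1 p.2|) (u, v)).
Qed.

Lemma dist_sup_ge0 (e e' : rel T) : 0 <= dist_sup e e' :> R.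
Proof. by rewrite /dist_sup; apply: bigmax_ge_id. Qed.

End Curvature.

Theorem proposition1 (R : realType) (T : finType) (e : rel T) (w : T -> T -> R)
  (x y : T) (wxy : R) :
  simple_graph e ->
  (forall u v, connect e u v) ->
  (forall u v, e u v -> 0 < w u v) ->
  (forall u v, w u v = w v u) ->
  x != y -> ~~ e x y -> 0 < wxy ->
  let es := add_edge e x y in
  let ws := add_weight w x y wxy in
  forall a b : T, a != b ->
    (ollivier es ws a b - ollivier e w a b
       <= (W1 (hopR e) (nbr_measure e w a) (nbr_measure e w b)
           - W1 (hopR es) (nbr_measure es ws a) (nbr_measure es ws b))
          / hopR es a b)
    /\
    ((a \notin [:: x; y]) -> (b \notin [:: x; y]) ->
     (exists pi, coupling pi (nbr_measure es ws a) (nbr_measure es ws b) /\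
        cost (hopR es) pi = W1 (hopR es) (nbr_measure es ws a) (nbr_measure es ws b)) ->
     ollivier es ws a b - ollivier e w a b <= dist_sup e es / hopR es a b).
Proof.
(* The bounds hold for arbitrary graphs and weights: no hypothesis is used. *)
move=> _ _ _ _ _ _ _ es ws a b ab.
have curv_le := ollivier_sub_le w ws (@subrel_add_edge _ e x y) ab.
split => // a_nxy b_nxy [pi [pi_coupling pi_opt]].
apply: le_trans curv_le _; rewrite ler_wpM2r ?invr_ge0 ?hopR_ge0 //.
rewrite /es /ws !nbr_measure_add_edge // in pi_coupling pi_opt *.
apply: W1_sub_le_optimal pi_coupling pi_opt.
- exact: hopR_ge0.
- exact: dist_sup_ge.
- exact: dist_sup_ge0.
- exact: nbr_measure_sum_le1.
Qed.
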